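(* Let $\mathcal{X}=G^{\min}/P$ be the affine Grassmannian of the minimal affine Kac–Moody group $\widehat{SL_2}$, and let $c^k_{n,m}\in\mathbb{Z}[\alpha_0,\alpha_1]$ be the $T$-equivariant Schubert structure constants, $\hat{\varepsilon}_n\cdot\hat{\varepsilon}_m=\sum_{k=\max\{n,m\}}^{n+m}c^k_{n,m}\hat{\varepsilon}_k$. Then for integers $n\le m$, $$c^{m}_{n,m}= \begin{cases} \binom{\frac{m+n}{2}}{n}\prod_{i=0}^{n-1}\Big(\big(\tfrac{m-n}{2}+i\big)\alpha_0+\big(\tfrac{m-n}{2}+1+i\big)\alpha_1\Big) & n,m\text{ even},\\[1ex] \binom{\frac{m+n}{2}}{n}\prod_{i=0}^{n-1}\Big(\big(\tfrac{m-n}{2}+1+i\big)\alpha_0+\big(\tfrac{m-n}{2}+i\big)\alpha_1\Big) & n,m\text{ odd},\\[1ex] \binom{\frac{m+n-1}{2}}{n}\prod_{i=0}^{n-1}\Big(\big(\tfrac{m-n+1}{2}+i\big)\alpha_0+\big(\tfrac{m-n+1}{2}+1+i\big)\alpha_1\Big) & n\text{ odd}, m\text{ even},\\[1ex] \binom{\frac{m+n-1}{2}}{n}\prod_{i=0}^{n-1}\Big(\big(\tfrac{m-n+1}{2}+1+i\big)\alpha_0+\big(\tfrac{m-n+1}{2}+i\big)\alpha_1\Big) & n\text{ even}, m\text{ odd}. \end{cases}$$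
   Context: $T$ is the adjoint torus of $\widehat{SL_2}$, $H^\bullet_T(\mathrm{pt})=\mathbb{Z}[\alpha_0,\alpha_1]$ (polynomials in the simple roots), and $\{\hat{\varepsilon}_i\}_{i\ge0}$ is the $T$-equivariant Schubert basis of $H^\bullet_T(\mathcal{X})$ (Kumar's basis), indexed by $w_i$, the alternating word of length $i$ in $s_0,s_1$ ending in $s_0$, where $P$ is the maximal parabolic with Weyl group $\{e,s_1\}$. It satisfies $\hat\varepsilon_0=1$ and the equivariant Chevalley formula $\hat{\varepsilon}_1\cdot\hat{\varepsilon}_m=q_m\hat{\varepsilon}_m+(m+1)\hat{\varepsilon}_{m+1}$ with $q_m=\lceil m/2\rceil^2\alpha_0+(\lfloor m/2\rfloor^2+\lfloor m/2\rfloor)\alpha_1$. An empty product equals $1$. *)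

From HB Require Import structures.
From mathcomp Require Import all_boot all_order all_algebra.
From mathcomp.multinomials Require Import mpoly.
Set Implicit Arguments. Unset Strict Implicit. Unset Printing Implicit Defensive.
Import GRing.Theory.
Local Open Scope ring_scope.

(* H_T(pt) = Z[alpha0, alpha1] *)
Definition HT := {mpoly int[2]}.
Definition alpha0 : HT := 'X_(inord 0).
Definition alpha1 : HT := 'X_(inord 1).

Definition qcoef (m : nat) : HT :=
  ((uphalf m) ^ 2)%N%:R * alpha0 + ((m./2) ^ 2 + m./2)%N%:R * alpha1.

Definition cmm_formula (n m : nat) : HT :=
  if ~~ odd n && ~~ odd m then
    ('C((m + n) %/ 2, n))%:R *
      \prod_(i < n) ((((m - n) %/ 2) + i)%N%:R * alpha0
                     + (((m - n) %/ 2) + 1 + i)%N%:R * alpha1)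
  else if odd n && odd m then
    ('C((m + n) %/ 2, n))%:R *
      \prod_(i < n) ((((m - n) %/ 2) + 1 + i)%N%:R * alpha0
                     + (((m - n) %/ 2) + i)%N%:R * alpha1)
  else if odd n && ~~ odd m then
    ('C((m + n - 1) %/ 2, n))%:R *
      \prod_(i < n) ((((m - n + 1) %/ 2) + i)%N%:R * alpha0
                     + (((m - n + 1) %/ 2) + 1 + i)%N%:R * alpha1)
  else
    ('C((m + n - 1) %/ 2, n))%:R *
      \prod_(i < n) ((((m - n + 1) %/ 2) + 1 + i)%N%:R * alpha0
                     + (((m - n + 1) %/ 2) + i)%N%:R * alpha1).

(* Abstract description of H_T(X) with its Schubert basis eps:
   a commutative Z[alpha0,alpha1]-algebra A, eps linearly independent,
   eps 0 = 1, equivariant Chevalley formula. *)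
Record SchubertData (A : comAlgType HT) (eps : nat -> A) : Prop := {
  sd_indep : forall (N : nat) (f : nat -> HT),
      \sum_(k < N) f k *: eps k = 0 -> forall k, (k < N)%N -> f k = 0;
  sd_one : eps 0%N = 1;
  sd_chevalley : forall m : nat,
      eps 1%N * eps m = qcoef m *: eps m + (m.+1)%:R *: eps m.+1
}.

Definition structure_constants (A : comAlgType HT) (eps : nat -> A)
  (c : nat -> nat -> nat -> HT) : Prop :=
  forall n m : nat,
    eps n * eps m = \sum_(maxn n m <= k < (n + m).+1) c k n m *: eps k.

From HB Require Import structures.
From mathcomp Require Import all_boot all_order all_algebra ring zify.
From mathcomp.multinomials Require Import mpoly.
Set Implicit Arguments. Unset Strict Implicit. Unset Printing Implicit Defensive.
Local Open Scope ring_scope.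
Import GRing.Theory.

(* Modulo the span of the classes eps_k with k > m, eps_n * eps_m is just
   c^m_{n,m} eps_m, and by the Chevalley formula multiplication by eps_1 keeps
   that span stable.  Expanding eps_1 * eps_n * eps_m in the two possible ways
   thus gives (n + 1) c^m_{n+1,m} = (q_m - q_n) c^m_{n,m}, and with
   c^m_{0,m} = 1 this yields n! c^m_{n,m} = prod_{j < n} (q_m - q_j).  Each
   q_m - q_j is an integer multiple of a positive real root, and as j runs
   over [0, n) these roots fill a string of consecutive roots, so the product
   is a falling factorial (n! times the binomial coefficient) times the
   product of roots in the statement. *)

(* The positive real root s delta + alpha1 (m even) or s delta + alpha0 (m odd),
   with delta = alpha0 + alpha1. *)
Definition real_root (m s : nat) : HT :=
  if odd m then s.+1%:R * alpha0 + s%:R * alpha1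
  else s%:R * alpha0 + s.+1%:R * alpha1.

Lemma natrHT_eq0 k : (k%:R == 0 :> HT) = (k == 0)%N.
Proof. by rewrite -mpolyC_nat mpolyC_eq0 Num.Theory.pnatr_eq0. Qed.

Lemma qcoef_double k :
  qcoef k.*2 = (k ^ 2)%:R * alpha0 + (k ^ 2 + k)%:R * alpha1.
Proof. by rewrite /qcoef uphalf_double doubleK. Qed.

Lemma qcoef_doubleS k :
  qcoef k.*2.+1 = (k.+1 ^ 2)%:R * alpha0 + (k ^ 2 + k)%:R * alpha1.
Proof. by rewrite /qcoef /= uphalf_double doubleK. Qed.

Lemma qcoef_subDdouble n e :
  qcoef (n + e.*2) - qcoef n = e%:R * real_root (n + e.*2) (n + e).
Proof.
rewrite -(odd_double_half n); case: (odd n); set b := n./2;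
  rewrite /= ?add0n ?add1n ?addSn -doubleD /real_root /= ?odd_double /=
          ?qcoef_double ?qcoef_doubleS -!addnn !(natrD, natrX, mulrS); ring.
Qed.

Lemma qcoef_subDdoubleS n e :
  qcoef (n + e.*2.+1) - qcoef n = (n + e).+1%:R * real_root (n + e.*2.+1) e.
Proof.
rewrite -(odd_double_half n); case: (odd n); set b := n./2;
  rewrite /= ?add0n ?add1n ?addSn ?addnS -doubleD -?doubleS /real_root /=
          ?odd_double /= ?qcoef_double ?qcoef_doubleS -!addnn
          !(natrD, natrX, mulrS); ring.
Qed.

Lemma prod_qcoef_sub n m : (n <= m)%N ->
  \prod_(j < n) (qcoef m - qcoef j) =
  ((m + n)./2 ^_ n)%:R * \prod_(i < n) real_root m (uphalf (m - n) + i).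
Proof.
elim: n => [|n IH] lt_nm; first by rewrite !big_ord0 ffactn0 mulr1.
rewrite big_ord_recr IH; last exact: ltnW.
have [[e me] | [e me]] :
    (exists e, m = (n + e.*2.+1)%N) \/ (exists e, m = (n + e.+1.*2)%N).
  by case/boolP: (odd (m - n)) => par;
    [left; exists (m - n)./2 | right; exists (m - n)./2.-1]; lia.
- have -> : ((m + n)./2 = n + e)%N by lia.
  have -> : ((m + n.+1)./2 = (n + e).+1)%N by lia.
  have -> : (uphalf (m - n) = e.+1)%N by lia.
  have -> : (uphalf (m - n.+1) = e)%N by lia.
  have -> : qcoef m - qcoef n = (n + e).+1%:R * real_root m e.
    by rewrite me qcoef_subDdoubleS.
  rewrite ffactSS natrM big_ord_recl addn0 /=.
  under [in RHS]eq_bigr => i _ do rewrite -addSnnS.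
  ring.
- have -> : ((m + n)./2 = n + e.+1)%N by lia.
  have -> : ((m + n.+1)./2 = n + e.+1)%N by lia.
  have -> : (uphalf (m - n) = e.+1)%N by lia.
  have -> : (uphalf (m - n.+1) = e.+1)%N by lia.
  have -> : qcoef m - qcoef n = e.+1%:R * real_root m (e.+1 + n).
    by rewrite [(e.+1 + n)%N]addnC me qcoef_subDdouble.
  rewrite ffactnSr natrM big_ord_recr addKn /=.
  ring.
Qed.

Lemma cmm_formulaE n m : (n <= m)%N ->
  cmm_formula n m =
  'C((m + n)./2, n)%:R * \prod_(i < n) real_root m (uphalf (m - n) + i).
Proof.
move=> le_nm; rewrite /cmm_formula /real_root.
case: (boolP (odd m)) => om; case: (boolP (odd n)) => on /=;
  congr (_%:R * _); try (congr 'C(_, _); lia);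
  apply: eq_bigr => i _; congr (_%:R * _ + _%:R * _); lia.
Qed.

Section SchubertExpansion.

Variables (A : comAlgType HT) (eps : nat -> A).
Hypothesis eps_data : SchubertData eps.

Lemma eps_free lo hi (f : nat -> HT) :
  \sum_(lo <= k < hi) f k *: eps k = 0 -> forall k, (lo <= k < hi)%N -> f k = 0.
Proof.
move=> sum0 k /andP[le_lok lt_khi].
have /= := sd_indep eps_data (f := fun k => if (lo <= k)%N then f k else 0) _ lt_khi.
rewrite le_lok; apply; rewrite -[RHS]sum0 (big_nat_widenl _ 0) // big_mkcondr big_mkord.
by apply: eq_bigr => j _; case: ifP; rewrite ?scale0r.
Qed.

Definition span_above (m : nat) (x : A) : Prop :=
  exists N (f : nat -> HT), x = \sum_(m.+1 <= k < N) f k *: eps k.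

Lemma span_above0 m : span_above m 0.
Proof. by exists 0%N, (fun=> 0); rewrite big_geq. Qed.

Lemma span_aboveD m x y : span_above m x -> span_above m y -> span_above m (x + y).
Proof.
have widen N N' f : (N <= N')%N -> \sum_(m.+1 <= k < N) f k *: eps k =
    \sum_(m.+1 <= k < N') (if (k < N)%N then f k else 0) *: eps k.
  move=> le_NN'; rewrite (big_nat_widen _ _ _ _ _ le_NN') big_mkcondr.
  by apply: eq_bigr => k _; case: ifP; rewrite ?scale0r.
move=> [N [f ->]] [N' [f' ->]]; exists (maxn N N').
exists (fun k => (if (k < N)%N then f k else 0) + (if (k < N')%N then f' k else 0)).
rewrite (widen _ _ _ (leq_maxl N N')) (widen _ _ _ (leq_maxr N N')) -big_split.
by apply: eq_bigr => k _; rewrite scalerDl.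
Qed.

Lemma span_aboveZ m a x : span_above m x -> span_above m (a *: x).
Proof.
move=> [N [f ->]]; exists N, (fun k => a * f k).
by rewrite scaler_sumr; apply: eq_bigr => k _; rewrite scalerA.
Qed.

Lemma span_above_sum m (I : Type) (r : seq I) (P : pred I) (F : I -> A) :
  (forall i, P i -> span_above m (F i)) -> span_above m (\sum_(i <- r | P i) F i).
Proof. by apply: big_ind => //; [exact: span_above0 | exact: span_aboveD]. Qed.

Lemma span_above_eps m k : (m < k)%N -> span_above m (eps k).
Proof.
move=> lt_mk; exists k.+1, (fun j => if j == k then 1 else 0).
rewrite big_nat_recr //= eqxx scale1r big1_seq ?add0r // => j /andP[_].
by rewrite mem_index_iota => /andP[_ /ltn_eqF ->]; rewrite scale0r.
Qed.

Lemma span_above_mul_eps1 m x : span_above m x -> span_above m (eps 1 * x).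
Proof.
move=> [N [f ->]]; rewrite mulr_sumr big_seq; apply: span_above_sum => k.
rewrite mem_index_iota => /andP[lt_mk _].
rewrite -scalerAr (sd_chevalley eps_data) scalerDr.
by apply: span_aboveD; apply/span_aboveZ/span_aboveZ/span_above_eps; rewrite // ltnW.
Qed.

Lemma span_above_lead m a x : a *: eps m + x = 0 -> span_above m x -> a = 0.
Proof.
move=> sum0 [N [f Ex]]; set M := maxn N m.+1.
pose g k := if k == m then a else if (k < N)%N then f k else 0.
suff : g m = 0 by rewrite /g eqxx.
apply: (@eps_free m M); last by rewrite leqnn leq_maxr.
rewrite big_ltn ?leq_maxr // /g eqxx -[RHS]sum0 Ex; congr (_ + _).
rewrite (big_nat_widen _ _ _ _ _ (leq_maxl N m.+1)) big_mkcondr.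
apply: eq_big_nat => k /andP[lt_mk _]; rewrite gtn_eqF //.
by case: ifP; rewrite ?scale0r.
Qed.

Lemma lead_coef_eq m a b x y : a *: eps m + x = b *: eps m + y ->
  span_above m x -> span_above m y -> a = b.
Proof.
move=> E sx sy; apply/eqP; rewrite -subr_eq0; apply/eqP.
apply: (@span_above_lead m _ (x - y)).
  by rewrite scalerBl addrACA -opprD E subrr.
by rewrite -scaleN1r; apply/span_aboveD/span_aboveZ.
Qed.

Variable c : nat -> nat -> nat -> HT.
Hypothesis c_expand : structure_constants eps c.

Lemma mul_eps_lead n m : (n <= m)%N ->
  exists2 x, span_above m x & eps n * eps m = c m n m *: eps m + x.
Proof.
move=> le_nm; rewrite c_expand (maxn_idPr le_nm) big_ltn ?ltnS ?leq_addl //.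
exists (\sum_(m.+1 <= k < (n + m).+1) c k n m *: eps k) => //.
by exists (n + m).+1, (fun k => c k n m).
Qed.

Lemma c_diag0 m : c m 0 m = 1.
Proof.
have [x sx E] := mul_eps_lead (leq0n m).
apply/esym/(@lead_coef_eq m _ _ 0 x) => //; last exact: span_above0.
by rewrite scale1r addr0 -E (sd_one eps_data) mul1r.
Qed.

Lemma c_diag_rec n m : (n < m)%N ->
  n.+1%:R * c m n.+1 m = (qcoef m - qcoef n) * c m n m.
Proof.
move=> lt_nm; have [x sx Enm] := mul_eps_lead (ltnW lt_nm).
have [y sy ESnm] := mul_eps_lead lt_nm.
have E : (c m n m * qcoef m) *: eps m
           + (c m n m *: (m.+1%:R *: eps m.+1) + eps 1 * x)
       = (qcoef n * c m n m + n.+1%:R * c m n.+1 m) *: eps m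
           + (qcoef n *: x + n.+1%:R *: y).
  transitivity (eps 1 * (eps n * eps m)).
    rewrite Enm [RHS]mulrDr -scalerAr (sd_chevalley eps_data) scalerDr.
    by rewrite -scalerA addrA.
  rewrite mulrA (sd_chevalley eps_data) [LHS]mulrDl -!scalerAl Enm ESnm.
  by rewrite !scalerDr !scalerA addrACA -scalerDl.
have lead := lead_coef_eq E (span_aboveD (span_aboveZ _ (span_aboveZ _
                (span_above_eps (ltnSn m)))) (span_above_mul_eps1 sx))
                (span_aboveD (span_aboveZ _ sx) (span_aboveZ _ sy)).
by rewrite mulrBl [qcoef m * _]mulrC lead addrAC subrr add0r.
Qed.

Lemma fact_mul_c_diag n m : (n <= m)%N ->
  n`!%:R * c m n m = \prod_(j < n) (qcoef m - qcoef j).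
Proof.
elim: n => [|n IH] lt_nm; first by rewrite c_diag0 fact0 mulr1 big_ord0.
rewrite big_ord_recr -IH; last exact: ltnW.
by rewrite factS natrM mulrAC (c_diag_rec lt_nm) mulrC mulrA mulrAC.
Qed.

End SchubertExpansion.

Theorem mainTheorem7 (A : comAlgType HT) (eps : nat -> A)
  (c : nat -> nat -> nat -> HT)
  (Hsd : SchubertData eps) (Hc : structure_constants eps c)
  (n m : nat) (Hnm : (n <= m)%N) :
  c m n m = cmm_formula n m.
Proof.
have fact_neq0 : n`!%:R != 0 :> HT by rewrite natrHT_eq0 -lt0n fact_gt0.
apply: (mulfI fact_neq0).
rewrite (fact_mul_c_diag Hsd Hc Hnm) (prod_qcoef_sub Hnm) (cmm_formulaE Hnm).
by rewrite mulrA -natrM mulnC bin_ffact.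
Qed.
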